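(* The tableau calculus $\mathbf{TAB}_{\mathbf{IB}}$ has the termination property: for every tableau of $\mathbf{TAB}_{\mathbf{IB}}$, every branch of it is finite.
   Context: Hybrid language: fix disjoint countably infinite sets $\mathbf{Prop}$ (propositional variables) and $\mathbf{Nom}$ (nominals). Formulas: $\varphi ::= p \mid i \mid \neg\varphi \mid \varphi\land\varphi \mid \Diamond\varphi \mid @_i\varphi$ with $p\in\mathbf{Prop}$, $i\in\mathbf{Nom}$; $\Box\varphi$ abbreviates $\neg\Diamond\neg\varphi$. Tableau calculus $\mathbf{TAB}_{\mathbf{IB}}$. A tableau is a well-founded tree whose nodes are formulas of the form $@_i\varphi$; its root is a formula $@_i\varphi$ (the root formula) where $i$ does not occur in $\varphi$. A branch is a maximal path; $\varphi\in\Theta$ means $\varphi$ occurs on branch $\Theta$. Each branch is extended by applying the rules below to its formulas as often as possible, except that no further formula is added to a branch once either (i) every new formula generated by applying any rule already occurs on the branch, or (ii) the branch is closed, i.e. contains $@_i\varphi$ and $@_i\neg\varphi$ for some formula $\varphi$ and nominal $i$. An accessibility formula is a formula $@_i\Diamond j$ added by rule $[\Diamond]$ (with $j$ the new nominal). Rules (premises already on the branch; conclusions added to it): [$\neg\neg$] from $@_i\neg\neg\varphi$ add $@_i\varphi$; [$\land$] from $@_i(\varphi\land\psi)$ add $@_i\varphi$ and $@_i\psi$; [$\neg\land$] from $@_i\neg(\varphi\land\psi)$ split the branch into one extended by $@_i\neg\varphi$ and one extended by $@_i\neg\psi$; [$\Diamond$] from $@_i\Diamond\varphi$, which is not an accessibility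 formula, add $@_i\Diamond j$ and $@_j\varphi$ where $j$ is a nominal not occurring on the branch; this rule is applied at most once per formula, and only if $i$ is a quasi-urfather on the branch (defined below); [$\neg\Diamond$] from $@_i\neg\Diamond\varphi$ and $@_i\Diamond j$ add $@_j\neg\varphi$; [$\Box_{sym}$] from $@_i\Box\varphi$ and $@_j\Diamond i$ add $@_j\varphi$; [$@$] from $@_i@_j\varphi$ add $@_j\varphi$; [$\neg@$] from $@_i\neg@_j\varphi$ add $@_j\neg\varphi$; [$Id$] from $@_i\varphi$, which is not an accessibility formula, and $@_i j$ add $@_j\varphi$; [$Ref$] for any nominal $i$ occurring on the branch add $@_i i$; ($\mathcal{I}$) for any nominal $i$ occurring on the branch add $@_i\neg\Diamond i$. Auxiliary notions for a branch $\Theta$. $@_i\varphi$ is a quasi-subformula of $@_j\psi$ if $\varphi$ is a subformula of $\psi$, or $\varphi=\neg\chi$ with $\chi$ a subformula of $\psi$. For a nominal $i$ occurring in $\Theta$, $T^\Theta(i)=\{\varphi \mid @_i\varphi\in\Theta$ and $@_i\varphi$ is a quasi-subformula of the root formula$\}$. Nominals $i,j$ are twins in $\Theta$ if $T^\Theta(i)=T^\Theta(j)$. $i\prec_\Theta j$ if $j$ was introduced by applying $[\Diamond]$ to a formula $@_i\Diamond\varphi$ (equivalently, the accessibility formula $@_i\Diamond j$ is in $\Theta$); $\prec_\Theta^*$ is its reflexive transitive closure. A nominal $i$ is a quasi-urfather on $\Theta$ if there are no twins $j\neq k$ with $j\prec_\Theta^* i$ and $k\prec_\Theta^* i$. *)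

From Stdlib Require Import List Relations.
Import ListNotations.

Inductive form : Type :=
| Pvar : nat -> form
| Nom  : nat -> form
| Neg  : form -> form
| And  : form -> form -> form
| Dia  : form -> form
| At   : nat -> form -> form.

Definition Box (f : form) : form := Neg (Dia (Neg f)).

Fixpoint noms (f : form) : list nat :=
  match f with
  | Pvar _ => []
  | Nom i => [i]
  | Neg g => noms g
  | And g h => noms g ++ noms h
  | Dia g => noms g
  | At i g => i :: noms g
  end.

Inductive subf : form -> form -> Prop :=
| subf_refl : forall f, subf f f
| subf_neg  : forall f g, subf f g -> subf f (Neg g)
| subf_andl : forall f g h, subf f g -> subf f (And g h)
| subf_andr : forall f g h, subf f h -> subf f (And g h)
| subf_dia  : forall f g, subf f g -> subf f (Dia g)
| subf_at   : forall f i g, subf f g -> subf f (At i g).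

(* A tableau formula @_i phi is represented by the pair (i, phi). *)
Definition sat := (nat * form)%type.

(* A node of a branch: the formula @_i phi together with a tag.
   Tag [Some p] means the node is an accessibility formula, added by
   rule [Dia] applied to the premise p; tag [None] means it is not. *)
Definition node := (sat * option sat)%type.

(* A branch (so far): list of nodes, newest first. *)
Definition branch := list node.

Definition onb (B : branch) (s : sat) : Prop := In s (map fst B).

Definition plain (B : branch) (s : sat) : Prop := In (s, None) B.

Definition nom_on (B : branch) (i : nat) : Prop :=
  exists s, onb B s /\ In i (fst s :: noms (snd s)).

Definition closed (B : branch) : Prop :=
  exists i f, onb B (i, f) /\ onb B (i, Neg f).

Definition qsub (phi psi : form) : Prop :=
  subf phi psi \/ exists chi, phi = Neg chi /\ subf chi psi.

Definition Tset (root : sat) (B : branch) (i : nat) (phi : form) : Prop :=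
  onb B (i, phi) /\ qsub phi (snd root).

Definition twins (root : sat) (B : branch) (j k : nat) : Prop :=
  forall phi, Tset root B j phi <-> Tset root B k phi.

Definition prec (B : branch) (i j : nat) : Prop :=
  exists p, In ((i, Dia (Nom j)), Some p) B.

Definition prec_star (B : branch) : nat -> nat -> Prop :=
  clos_refl_trans nat (prec B).

Definition quasi_urfather (root : sat) (B : branch) (i : nat) : Prop :=
  ~ exists j k, j <> k /\ twins root B j k /\ prec_star B j i /\ prec_star B k i.

(* [RuleApp root B out]: applying one rule of TAB_IB to premises on B yields
   the list of nodes [out] (for the branching rule, one of its alternatives). *)
Inductive RuleApp (root : sat) (B : branch) : list node -> Prop :=
| r_negneg : forall i f, onb B (i, Neg (Neg f)) ->
    RuleApp root B [((i, f), None)]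
| r_and : forall i f g, onb B (i, And f g) ->
    RuleApp root B [((i, f), None); ((i, g), None)]
| r_nand_l : forall i f g, onb B (i, Neg (And f g)) ->
    RuleApp root B [((i, Neg f), None)]
| r_nand_r : forall i f g, onb B (i, Neg (And f g)) ->
    RuleApp root B [((i, Neg g), None)]
| r_dia : forall i f j,
    plain B (i, Dia f) ->
    ~ (exists s, In (s, Some (i, Dia f)) B) ->     (* applied at most once per formula *)
    quasi_urfather root B i ->
    ~ nom_on B j ->
    RuleApp root B [((i, Dia (Nom j)), Some (i, Dia f)); ((j, f), None)]
| r_ndia : forall i f j, onb B (i, Neg (Dia f)) -> onb B (i, Dia (Nom j)) ->
    RuleApp root B [((j, Neg f), None)]
| r_boxsym : forall i f j, onb B (i, Box f) -> onb B (j, Dia (Nom i)) ->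
    RuleApp root B [((j, f), None)]
| r_at : forall i j f, onb B (i, At j f) ->
    RuleApp root B [((j, f), None)]
| r_nat : forall i j f, onb B (i, Neg (At j f)) ->
    RuleApp root B [((j, Neg f), None)]
| r_id : forall i f j, plain B (i, f) -> onb B (i, Nom j) ->
    RuleApp root B [((j, f), None)]
| r_ref : forall i, nom_on B i ->
    RuleApp root B [((i, Nom i), None)]
| r_irr : forall i, nom_on B i ->
    RuleApp root B [((i, Neg (Dia (Nom i))), None)].

Definition Step (root : sat) (B B' : branch) : Prop :=
  ~ closed B /\
  exists out new,
    RuleApp root B out /\
    (forall n, In n new <-> (In n out /\ ~ onb B (fst n))) /\
    new <> [] /\
    B' = new ++ B.

(* A branch of a tableau with root formula @_i phi is a sequence of steps
   starting from the one-node branch [@_i phi]. *)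
Definition root_branch (root : sat) : branch := [(root, None)].

From Stdlib Require Import List Relations Arith Lia Classical.
Import ListNotations.

Set Implicit Arguments.
Unset Strict Implicit.

(* Every formula on a branch is a quasi-subformula of the root formula or one
   of four formulas built from a single nominal, so it suffices to bound the
   number of nominals.  A nominal is either a root nominal or was introduced by
   [Dia] from a parent nominal; the formulas [f] of the premises @_y Dia f along
   the chain of parents form an injective code of the nominal.  The
   quasi-urfather condition bounds the length of codes: among the ancestors of
   a nominal whose code is at least as long as the number of possible T-sets,
   two distinct ones have the same T-set, i.e. are twins, so [Dia] is blocked
   there.  Hence codes, nominals and formulas on a branch are bounded, while
   every step adds a new formula. *)

Definition form_eq_dec (f g : form) : {f = g} + {f <> g}.
Proof. decide equality; apply Nat.eq_dec. Defined.

Definition sat_eq_dec (s t : sat) : {s = t} + {s <> t}.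
Proof. decide equality; [apply form_eq_dec | apply Nat.eq_dec]. Defined.

Definition code_eq_dec (p q : nat * list form) : {p = q} + {p <> q}.
Proof. decide equality; [apply (list_eq_dec form_eq_dec) | apply Nat.eq_dec]. Defined.

Lemma pigeonhole_rel {A T : Type} (T_eq_dec : forall x y : T, {x = y} + {x <> y})
    (R : A -> T -> Prop) (l : list A) (V : list T) :
  NoDup l -> (forall a, In a l -> exists v, In v V /\ R a v) -> length V < length l ->
  exists a a' v, In a l /\ In a' l /\ a <> a' /\ R a v /\ R a' v.
Proof.
  revert V; induction l as [|a l IH]; intros V Hnd Hex Hlen; [simpl in Hlen; lia|].
  apply NoDup_cons_iff in Hnd as [Ha Hnd].
  destruct (Hex a (in_eq a l)) as (v & Hv & Rav).
  destruct (classic (exists a', In a' l /\ R a' v)) as [(a' & Ha' & Ra'v) | Hfree].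
  - exists a, a', v. repeat split; simpl; auto. intros ->. contradiction.
  - destruct (IH (remove T_eq_dec v V)) as (a1 & a2 & w & H1 & H2 & Hne & R1 & R2); auto.
    + intros a' Ha'. destruct (Hex a' (in_cons a a' l Ha')) as (w & Hw & Ra'w).
      exists w. split; [|exact Ra'w]. apply in_in_remove; [|exact Hw].
      intros ->. eauto.
    + pose proof (remove_length_lt T_eq_dec V v Hv). simpl in Hlen. lia.
    + exists a1, a2, w. simpl. auto.
Qed.

Fixpoint lists_upto {A : Type} (l : list A) (n : nat) : list (list A) :=
  match n with
  | 0 => [[]]
  | S n => [] :: flat_map (fun a => map (cons a) (lists_upto l n)) l
  end.

Lemma in_lists_upto {A : Type} (l : list A) n c :
  length c <= n -> incl c l -> In c (lists_upto l n).
Proof.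
  revert c; induction n as [|n IH]; intros [|a c] Hlen Hc; simpl in *; auto; try lia.
  right. apply in_flat_map. exists a. split; [apply Hc; left; reflexivity|].
  apply in_map, IH; [lia | exact (proj2 (incl_cons_inv Hc))].
Qed.

Fixpoint sublists {A : Type} (l : list A) : list (list A) :=
  match l with
  | [] => [[]]
  | a :: l => map (cons a) (sublists l) ++ sublists l
  end.

Lemma filter_in_sublists {A : Type} (p : A -> bool) l : In (filter p l) (sublists l).
Proof.
  induction l as [|a l IH]; simpl; auto.
  apply in_or_app. destruct (p a); [left; apply in_map | right]; exact IH.
Qed.

Lemma subf_trans f g h : subf f g -> subf g h -> subf f h.
Proof. intros Hfg Hgh. induction Hgh; eauto using subf. Qed.

Fixpoint subfs (f : form) : list form :=
  f :: match f with
       | Pvar _ | Nom _ => []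
       | Neg g | Dia g | At _ g => subfs g
       | And g h => subfs g ++ subfs h
       end.

Lemma in_subfs g f : subf g f -> In g (subfs f).
Proof.
  intros H. induction H; [destruct f|..]; simpl; auto; right; apply in_or_app; auto.
Qed.

Definition qsubfs (phi : form) : list form := subfs phi ++ map Neg (subfs phi).

Lemma in_qsubfs g phi : qsub g phi -> In g (qsubfs phi).
Proof.
  intros [H | (chi & -> & H)]; apply in_or_app; [left | right; apply in_map]; apply in_subfs, H.
Qed.

Lemma qsub_subf g phi : qsub g phi -> (forall h, g <> Neg h) -> subf g phi.
Proof. intros [H | (chi & E & _)] Hg; [exact H | contradiction (Hg chi E)]. Qed.

(* The formulas of non-accessibility nodes.  [Dia (Nom k)] is excluded so that
   the premises of [Dia] are subformulas of the root formula. *)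
Definition plain_shape (phi g : form) : Prop :=
  qsub g phi \/ exists k, g = Nom k \/ g = Neg (Nom k) \/ g = Neg (Dia (Nom k)).

Definition shape (phi g : form) : Prop := plain_shape phi g \/ exists k, g = Dia (Nom k).

Definition nominal_forms (k : nat) : list form :=
  [Nom k; Neg (Nom k); Neg (Dia (Nom k)); Dia (Nom k)].

(* [component g f]: some rule other than [Dia], [Id], [Ref] and (I) with
   premise @_i g concludes @_y f. *)
Inductive component : form -> form -> Prop :=
| comp_negneg f : component (Neg (Neg f)) f
| comp_andl f g : component (And f g) f
| comp_andr f g : component (And f g) g
| comp_nandl f g : component (Neg (And f g)) (Neg f)
| comp_nandr f g : component (Neg (And f g)) (Neg g)
| comp_ndia f : component (Neg (Dia f)) (Neg f)
| comp_box f : component (Neg (Dia (Neg f))) f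
| comp_at i f : component (At i f) f
| comp_nat i f : component (Neg (At i f)) (Neg f).

Lemma qsub_component phi g f : qsub g phi -> component g f -> qsub f phi.
Proof.
  intros [Hs | (chi & -> & Hs)] Hc; inversion Hc; subst;
    solve [ left; eapply subf_trans; [|exact Hs]; eauto 6 using subf
          | right; eexists; split; [reflexivity|]; eapply subf_trans; [|exact Hs];
            eauto 6 using subf ].
Qed.

Lemma plain_shape_component phi g f : shape phi g -> component g f -> plain_shape phi f.
Proof.
  intros [[Hq | (k & [-> | [-> | ->]])] | (k & ->)] Hc.
  1: left; exact (qsub_component Hq Hc).
  all: inversion Hc; subst; right; exists k; auto.
Qed.

Lemma component_noms g f : component g f -> incl (noms f) (noms g).
Proof. intros Hc. inversion Hc; simpl; auto with datatypes. Qed.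

Definition sat_noms (s : sat) : list nat := fst s :: noms (snd s).

Definition branch_noms (B : branch) : list nat := flat_map (fun n => sat_noms (fst n)) B.

Lemma nom_on_branch_noms B x : nom_on B x <-> In x (branch_noms B).
Proof.
  unfold nom_on, onb, branch_noms. rewrite in_flat_map. split.
  - intros (s & Hs & Hx). apply in_map_iff in Hs as (n & <- & Hn). exists n. auto.
  - intros (n & Hn & Hx). exists (fst n). split; [apply in_map|]; assumption.
Qed.

Lemma onb_branch_noms B s : onb B s -> incl (sat_noms s) (branch_noms B).
Proof. intros Hs x Hx. apply nom_on_branch_noms. exists s. auto. Qed.

Lemma plain_onb B s : plain B s -> onb B s.
Proof. exact (in_map fst B (s, None)). Qed.

Definition introduces (B : branch) (y : nat) (f : form) (x : nat) : Prop :=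
  In ((y, Dia (Nom x)), Some (y, Dia f)) B.

Definition distinct_sats (B : branch) : list sat := nodup sat_eq_dec (map fst B).

Lemma distinct_sats_step root B B' :
  Step root B B' -> length (distinct_sats B) < length (distinct_sats B').
Proof.
  intros (_ & out & new & _ & Hnew & Hne & ->).
  destruct new as [|n new]; [contradiction|].
  destruct (proj1 (Hnew n) (in_eq n new)) as [_ Hn].
  change (length (fst n :: distinct_sats B) <= length (distinct_sats ((n :: new) ++ B))).
  apply NoDup_incl_length.
  - constructor; [unfold distinct_sats; rewrite nodup_In; exact Hn | apply NoDup_nodup].
  - intros s Hs. apply nodup_In. destruct Hs as [<- | Hs]; [left; reflexivity|].
    apply nodup_In in Hs. right. rewrite map_app. apply in_or_app. right. exact Hs.
Qed.

(** * The branch invariant *)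

Section Termination.

Variables (r : nat) (phi : form).

Definition roots : list nat := r :: noms phi.

Inductive code (B : branch) : nat -> nat -> list form -> Prop :=
| code_root z : In z roots -> code B z z []
| code_intro y f x z c : introduces B y f x -> code B y z c -> code B x z (f :: c).

Definition tset_count : nat := length (sublists (qsubfs phi)).

Record invariant (B : branch) : Prop := {
  inv_plain : forall s, In (s, None) B -> plain_shape phi (snd s);
  inv_tagged : forall s p, In (s, Some p) B ->
    exists y f x, s = (y, Dia (Nom x)) /\ p = (y, Dia f) /\ subf f phi;
  inv_roots : incl roots (branch_noms B);
  inv_intro_not_root : forall y f x, introduces B y f x -> ~ In x roots;
  inv_intro_unique : forall y f x y' f' x', introduces B y f x -> introduces B y' f' x' ->
    x = x' \/ (y, f) = (y', f') -> (y, f, x) = (y', f', x');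
  inv_code : forall x, In x (branch_noms B) ->
    exists z c, code B x z c /\ length c <= tset_count
}.

Lemma code_incl B B' x z c : incl B B' -> code B x z c -> code B' x z c.
Proof.
  intros HB Hc. induction Hc as [z Hz | y f x z c Hi _ IH].
  - exact (code_root B' Hz).
  - eapply code_intro; [exact (HB _ Hi) | exact IH].
Qed.

Lemma shape_onb B x g : invariant B -> onb B (x, g) -> shape phi g.
Proof.
  intros I H. apply in_map_iff in H as ([s [p|]] & E & H); simpl in E; subst.
  - right. destruct (inv_tagged I H) as (y & f & k & E & _). injection E as _ ->. eauto.
  - left. exact (inv_plain I H).
Qed.

Lemma code_nil_inv B x z : code B x z [] -> x = z /\ In z roots.
Proof. intros H. inversion H. auto. Qed.

Lemma code_cons_inv B x z f c :
  code B x z (f :: c) -> exists y, introduces B y f x /\ code B y z c.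
Proof. intros H. inversion H. eauto. Qed.

Lemma code_fun B x z c z' c' : invariant B -> code B x z c -> code B x z' c' -> c = c'.
Proof.
  intros I Hc. revert z' c'.
  induction Hc as [z Hz | y f x z c Hi Hc IH]; intros z' [|f' c'] Hc'.
  - reflexivity.
  - destruct (code_cons_inv Hc') as (y & Hi & _). contradiction (inv_intro_not_root I Hi Hz).
  - destruct (code_nil_inv Hc') as [-> Hz']. contradiction (inv_intro_not_root I Hi Hz').
  - destruct (code_cons_inv Hc') as (y' & Hi' & Hc'').
    injection (inv_intro_unique I Hi Hi' (or_introl eq_refl)) as <- <-.
    f_equal. exact (IH _ _ Hc'').
Qed.

Lemma code_inj B x x' z c : invariant B -> code B x z c -> code B x' z c -> x = x'.
Proof.
  intros I. revert x x'.
  induction c as [|f c IH]; intros x x' Hc Hc'.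
  - destruct (code_nil_inv Hc), (code_nil_inv Hc'). congruence.
  - destruct (code_cons_inv Hc) as (y & Hi & Hy).
    destruct (code_cons_inv Hc') as (y' & Hi' & Hy').
    rewrite (IH _ _ Hy Hy') in Hi.
    now injection (inv_intro_unique I Hi Hi' (or_intror eq_refl)).
Qed.

Lemma code_ancestors B x z c : invariant B -> code B x z c ->
  exists ys, NoDup ys /\ length ys = S (length c) /\
    forall y, In y ys -> prec_star B y x /\ exists c', code B y z c' /\ length c' <= length c.
Proof.
  intros I Hc. induction Hc as [z Hz | y f x z c Hi Hc IH].
  - exists [z]. split; [repeat constructor; intros []|]. split; [reflexivity|].
    intros y [<- | []]. split; [apply rt_refl | exists []; split; [constructor|]; auto].
  - destruct IH as (ys & Hnd & Hlen & Hys). exists (x :: ys). split; [|split].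
    + constructor; [|exact Hnd]. intros Hx.
      destruct (Hys x Hx) as (_ & c' & Hc' & Hl).
      assert (c' = f :: c) as -> by (eapply code_fun; [exact I | exact Hc' | econstructor; eauto]).
      simpl in Hl. lia.
    + simpl. congruence.
    + intros w [<- | Hw].
      * split; [apply rt_refl | exists (f :: c); split; [econstructor; eauto | reflexivity]].
      * destruct (Hys w Hw) as (Hp & c' & Hc' & Hl). split.
        -- eapply rt_trans; [exact Hp | apply rt_step; exists (y, Dia f); exact Hi].
        -- exists c'. split; [exact Hc' | simpl; lia].
Qed.

Definition tset (B : branch) (y : nat) : list form :=
  filter (fun g => if in_dec sat_eq_dec (y, g) (map fst B) then true else false) (qsubfs phi).

Lemma in_tset B y g : In g (tset B y) <-> In g (qsubfs phi) /\ onb B (y, g).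
Proof.
  unfold tset, onb. rewrite filter_In.
  destruct (in_dec sat_eq_dec (y, g) (map fst B)); intuition discriminate.
Qed.

Lemma tset_twins B y y' : tset B y = tset B y' -> twins (r, phi) B y y'.
Proof.
  intros E g. unfold Tset. simpl.
  pose proof (in_tset B y g) as Hy. pose proof (in_tset B y' g) as Hy'. rewrite E in Hy.
  pose proof (@in_qsubfs g phi). tauto.
Qed.

Lemma long_code_not_quasi_urfather B x z c : invariant B -> code B x z c ->
  tset_count <= length c -> ~ quasi_urfather (r, phi) B x.
Proof.
  intros I Hc Hlen Hq.
  destruct (code_ancestors I Hc) as (ys & Hnd & Hys & Hanc).
  destruct (pigeonhole_rel (list_eq_dec form_eq_dec) (R := fun y T => tset B y = T)
              (V := sublists (qsubfs phi)) Hnd)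
    as (y & y' & T & Hy & Hy' & Hne & <- & HT).
  - intros y _. exists (tset B y). split; [apply filter_in_sublists | reflexivity].
  - unfold tset_count in Hlen. lia.
  - apply Hq. exists y, y'. split; [exact Hne|]. split; [apply tset_twins; congruence|].
    exact (conj (proj1 (Hanc y Hy)) (proj1 (Hanc y' Hy'))).
Qed.

Definition plain_output (B : branch) (n : node) : Prop :=
  snd n = None /\ plain_shape phi (snd (fst n)) /\ incl (sat_noms (fst n)) (branch_noms B).

Lemma component_output B i g f y : invariant B -> onb B (i, g) -> component g f ->
  In y (branch_noms B) -> plain_output B ((y, f), None).
Proof.
  intros I Ho Hc Hy. split; [reflexivity|]. split.
  - exact (plain_shape_component (shape_onb I Ho) Hc).
  - intros x [<- | Hx]; [exact Hy|]. apply (onb_branch_noms Ho). right.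
    exact (component_noms Hc Hx).
Qed.

Lemma RuleApp_cases B out : invariant B -> RuleApp (r, phi) B out ->
  (exists i f j, plain B (i, Dia f) /\ (forall s, ~ In (s, Some (i, Dia f)) B) /\
     quasi_urfather (r, phi) B i /\ ~ In j (branch_noms B) /\
     out = [((i, Dia (Nom j)), Some (i, Dia f)); ((j, f), None)])
  \/ Forall (plain_output B) out.
Proof.
  intros I H.
  destruct H as [i f Ho|i f g Ho|i f g Ho|i f g Ho|i f j Hp Hunused Hq Hj|i f j Ho Ho'
                |i f j Ho Ho'|i j f Ho|i j f Ho|i f j Hp Ho|i Ho|i Ho].
  5: { left. exists i, f, j. rewrite <- nom_on_branch_noms. split; [exact Hp|].
       split; [intros s Hs; apply Hunused; eauto | auto]. }
  all: right; repeat first [apply Forall_nil | apply Forall_cons].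
  all: try unfold Box in Ho.
  all: try (match goal with
            | P : onb _ (_, _) |- _ =>
                eapply component_output with (1 := I) (2 := P); [constructor|];
                match goal with
                | Q : onb _ _ |- _ => solve [apply (onb_branch_noms Q); simpl; auto]
                end
            end).
  (* The goals left are [Id], [Ref] and (I), in this order. *)
  2-3: rewrite nom_on_branch_noms in Ho; split; [reflexivity|];
       split; [right; exists i; auto | intros x [<- | [<- | []]]; exact Ho].
  split; [reflexivity|]. split; [exact (inv_plain I Hp)|].
  intros x [<- | Hx]; [apply (onb_branch_noms Ho); simpl; auto|].
  apply (onb_branch_noms (plain_onb Hp)). right. exact Hx.
Qed.

Lemma invariant_root : invariant (root_branch (r, phi)).
Proof.
  unfold root_branch. constructor.
  - intros s [E | []]. injection E as <-. left. left. constructor.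
  - intros s p [E | []]. discriminate.
  - intros x Hx. simpl. rewrite app_nil_r. exact Hx.
  - intros y f x [E | []]. discriminate.
  - intros y f x y' f' x' [E | []]. discriminate.
  - intros x Hx. simpl in Hx. rewrite app_nil_r in Hx.
    exists x, []. split; [constructor; exact Hx | simpl; lia].
Qed.

Lemma invariant_extend_plain B new :
  invariant B -> Forall (plain_output B) new -> invariant (new ++ B).
Proof.
  intros I Hnew. rewrite Forall_forall in Hnew.
  assert (Huntagged : forall s p, ~ In (s, Some p) new).
  { intros s p H. destruct (Hnew _ H) as [E _]. discriminate. }
  assert (Hintro : forall y f x, introduces (new ++ B) y f x -> introduces B y f x).
  { intros y f x H. apply in_app_iff in H as [H | H]; [contradiction (Huntagged _ _ H) | exact H]. }
  assert (Hnoms : incl (branch_noms (new ++ B)) (branch_noms B)).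
  { unfold branch_noms. rewrite flat_map_app. apply incl_app; [|apply incl_refl].
    intros x Hx. apply in_flat_map in Hx as (n & Hn & Hx).
    destruct (Hnew _ Hn) as (_ & _ & Hincl). exact (Hincl x Hx). }
  constructor.
  - intros s H. apply in_app_iff in H as [H | H]; [|exact (inv_plain I H)].
    destruct (Hnew _ H) as (_ & Hs & _). exact Hs.
  - intros s p H. apply in_app_iff in H as [H | H]; [contradiction (Huntagged _ _ H)|].
    exact (inv_tagged I H).
  - unfold branch_noms. rewrite flat_map_app. apply incl_appr, (inv_roots I).
  - intros y f x H. exact (inv_intro_not_root I (Hintro _ _ _ H)).
  - intros y f x y' f' x' H H'. exact (inv_intro_unique I (Hintro _ _ _ H) (Hintro _ _ _ H')).
  - intros x Hx. destruct (inv_code I (Hnoms x Hx)) as (z & c & Hc & Hl).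
    exists z, c. split; [|exact Hl]. eapply code_incl; [|exact Hc]. apply incl_appr, incl_refl.
Qed.

Lemma quasi_urfather_code B i : invariant B -> quasi_urfather (r, phi) B i ->
  In i (branch_noms B) -> exists z c, code B i z c /\ length c < tset_count.
Proof.
  intros I Hq Hi. destruct (inv_code I Hi) as (z & c & Hc & _). exists z, c. split; [exact Hc|].
  destruct (le_lt_dec tset_count (length c)) as [Hlong | Hshort]; [|exact Hshort].
  contradiction (long_code_not_quasi_urfather I Hc Hlong Hq).
Qed.

Section Dia_extension.

Variables (B : branch) (i : nat) (f : form) (j : nat) (new : branch).
Hypotheses (I : invariant B) (Hp : plain B (i, Dia f))
  (Hunused : forall s, ~ In (s, Some (i, Dia f)) B)
  (Hq : quasi_urfather (r, phi) B i) (Hj : ~ In j (branch_noms B))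
  (Hnew : forall n, In n new <-> n = ((i, Dia (Nom j)), Some (i, Dia f)) \/ n = ((j, f), None)).

Lemma dia_premise_subf : subf f phi.
Proof.
  destruct (inv_plain I Hp) as [Hqs | (k & [E | [E | E]])]; try discriminate.
  apply qsub_subf in Hqs; [|intros h E; discriminate].
  eapply subf_trans; [|exact Hqs]. repeat constructor.
Qed.

Lemma introduces_dia_extension y g x :
  introduces (new ++ B) y g x -> (y, g, x) = (i, f, j) \/ introduces B y g x.
Proof.
  intros H. apply in_app_iff in H as [H | H]; [|right; exact H].
  apply Hnew in H as [E | E]; [left; congruence | discriminate].
Qed.

Lemma introduces_before_dia y g x : introduces B y g x -> x <> j /\ (y, g) <> (i, f).
Proof.
  intros H. split.
  - intros ->. apply Hj, (onb_branch_noms (in_map fst B _ H)). right. left. reflexivity.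
  - intros E. injection E as -> ->. exact (Hunused H).
Qed.

Lemma branch_noms_dia_extension x :
  In x (branch_noms (new ++ B)) -> x = j \/ In x (branch_noms B).
Proof.
  intros Hx. unfold branch_noms in Hx. rewrite flat_map_app, in_app_iff, in_flat_map in Hx.
  destruct Hx as [(n & Hn & Hx) | Hx]; [|right; exact Hx].
  apply Hnew in Hn as [-> | ->]; simpl in Hx.
  - destruct Hx as [<- | [<- | []]]; [right | left]; auto.
    apply (onb_branch_noms (plain_onb Hp)). left. reflexivity.
  - destruct Hx as [<- | Hx]; [left; reflexivity|]. right.
    apply (onb_branch_noms (plain_onb Hp)). right. exact Hx.
Qed.

Lemma invariant_extend_dia : invariant (new ++ B).
Proof.
  assert (Hincl : incl B (new ++ B)) by apply incl_appr, incl_refl.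
  constructor.
  - intros s H. apply in_app_iff in H as [H | H]; [|exact (inv_plain I H)].
    apply Hnew in H as [E | E]; [discriminate|].
    injection E as ->. left. left. exact dia_premise_subf.
  - intros s p H. apply in_app_iff in H as [H | H]; [|exact (inv_tagged I H)].
    apply Hnew in H as [E | E]; [|discriminate].
    injection E as -> ->. exists i, f, j. auto using dia_premise_subf.
  - unfold branch_noms. rewrite flat_map_app. apply incl_appr, (inv_roots I).
  - intros y g x H. apply introduces_dia_extension in H as [E | H].
    + injection E as -> -> ->. intros Hr. exact (Hj (inv_roots I Hr)).
    + exact (inv_intro_not_root I H).
  - intros y g x y' g' x' H H' Heq.
    apply introduces_dia_extension in H as [E | H];
      apply introduces_dia_extension in H' as [E' | H'].
    + congruence.
    + injection E as -> -> ->. destruct (introduces_before_dia H'). destruct Heq; congruence.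
    + injection E' as -> -> ->. destruct (introduces_before_dia H). destruct Heq; congruence.
    + exact (inv_intro_unique I H H' Heq).
  - intros x Hx. apply branch_noms_dia_extension in Hx as [-> | Hx].
    + destruct (quasi_urfather_code I Hq (onb_branch_noms (plain_onb Hp) (in_eq i _)))
        as (z & c & Hc & Hl).
      exists z, (f :: c). split; [|simpl; lia].
      eapply code_intro; [|exact (code_incl Hincl Hc)].
      apply in_or_app. left. apply Hnew. left. reflexivity.
    + destruct (inv_code I Hx) as (z & c & Hc & Hl).
      exists z, c. split; [exact (code_incl Hincl Hc) | exact Hl].
Qed.

End Dia_extension.

Lemma invariant_step B B' : invariant B -> Step (r, phi) B B' -> invariant B'.
Proof.
  intros I (_ & out & new & Hrule & Hnew & _ & ->).
  destruct (RuleApp_cases I Hrule) as [(i & f & j & Hp & Hunused & Hq & Hj & ->) | Hplain].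
  - apply (invariant_extend_dia I Hp Hunused Hq Hj). intros n. rewrite Hnew. split.
    + intros [[<- | [<- | []]] _]; auto.
    + intros Hn. split; [destruct Hn as [-> | ->]; simpl; auto|].
      intros Hon. apply Hj, (onb_branch_noms Hon). destruct Hn as [-> | ->]; simpl; auto.
  - apply (invariant_extend_plain I). eapply incl_Forall; [|exact Hplain].
    intros n Hn. apply Hnew in Hn. tauto.
Qed.

(** * Bounds on branches *)

Definition codes_enum : list (nat * list form) :=
  list_prod roots (lists_upto (subfs phi) tset_count).

Lemma code_in_codes_enum B x z c :
  invariant B -> code B x z c -> length c <= tset_count -> In (z, c) codes_enum.
Proof.
  intros I Hc Hl. apply in_prod; [|apply in_lists_upto; [exact Hl|]]; clear Hl.
  - induction Hc; assumption.
  - induction Hc as [|y f x z c Hi _ IH]; [intros g []|].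
    intros g [<- | Hg]; [|exact (IH g Hg)].
    destruct (inv_tagged I Hi) as (y' & f' & x' & _ & E & Hf). injection E as _ ->.
    exact (in_subfs Hf).
Qed.

Lemma branch_noms_bound B :
  invariant B -> length (nodup Nat.eq_dec (branch_noms B)) <= length codes_enum.
Proof.
  intros I. destruct (le_lt_dec (length (nodup Nat.eq_dec (branch_noms B))) (length codes_enum))
    as [Hle | Hlt]; [exact Hle | exfalso].
  destruct (pigeonhole_rel code_eq_dec (R := fun x zc => code B x (fst zc) (snd zc))
              (V := codes_enum)
              (NoDup_nodup Nat.eq_dec (branch_noms B)))
    as (x & x' & [z c] & _ & _ & Hne & Hc & Hc'); [|exact Hlt|].
  - intros x Hx. apply nodup_In in Hx. destruct (inv_code I Hx) as (z & c & Hc & Hl).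
    exists (z, c). split; [exact (code_in_codes_enum I Hc Hl) | exact Hc].
  - exact (Hne (code_inj I Hc Hc')).
Qed.

Definition forms_enum (Ns : list nat) : list form := qsubfs phi ++ flat_map nominal_forms Ns.

Definition sat_bound : nat :=
  length codes_enum * (length (qsubfs phi) + 4 * length codes_enum).

Lemma distinct_sats_bound B : invariant B -> length (distinct_sats B) <= sat_bound.
Proof.
  intros I. set (Ns := nodup Nat.eq_dec (branch_noms B)).
  assert (Hincl : incl (distinct_sats B) (list_prod Ns (forms_enum Ns))).
  { intros [x g] H. apply nodup_In in H.
    assert (Hx : incl (sat_noms (x, g)) Ns).
    { intros k Hk. apply nodup_In, (onb_branch_noms H), Hk. }
    apply in_prod; [apply Hx; left; reflexivity|]. apply in_or_app.
    destruct (shape_onb I H) as [[Hq | (k & Hk)] | (k & ->)];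
      [left; exact (in_qsubfs Hq) | right; apply in_flat_map; exists k ..].
    - destruct Hk as [-> | [-> | ->]]; split; simpl; auto; apply Hx; simpl; auto.
    - split; simpl; auto. apply Hx. simpl. auto. }
  pose proof (NoDup_incl_length (NoDup_nodup _ _) Hincl) as Hle.
  change (length (distinct_sats B) <= @length (nat * form) (list_prod Ns (forms_enum Ns))) in Hle.
  rewrite length_prod in Hle. unfold forms_enum in Hle.
  rewrite length_app, (flat_map_constant_length (c := 4)) in Hle by reflexivity.
  pose proof (branch_noms_bound I) as HN. fold Ns in HN. unfold sat_bound. nia.
Qed.

End Termination.

Theorem theorem3 :
  forall (i : nat) (phi : form),
    ~ In i (noms phi) ->
    forall b : nat -> branch,
      b 0 = root_branch (i, phi) ->
      ~ (forall n, Step (i, phi) (b n) (b (S n))).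
Proof.
  intros i phi _ b Hb0 Hstep.
  assert (Hinv : forall n, invariant i phi (b n)).
  { induction n as [|n IH]; [rewrite Hb0; apply invariant_root|].
    exact (invariant_step IH (Hstep n)). }
  assert (Hgrow : forall n, n <= length (distinct_sats (b n))).
  { induction n as [|n IH]; [lia|]. pose proof (distinct_sats_step (Hstep n)). lia. }
  pose proof (Hgrow (S (sat_bound i phi))) as Hlow.
  pose proof (distinct_sats_bound (Hinv (S (sat_bound i phi)))) as Hhigh.
  lia.
Qed.
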